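(* Consider algorithm TRIEST-BASE (described in the context) run with integer parameter $M\ge 6$ on an insertion-only edge stream. For every time $t$: if $t\le M$ then $\xi^{(t)}\tau^{(t)}=\tau^{(t)}=|\Delta^{(t)}|$, and if $t>M$ then $\mathbb{E}\left[\xi^{(t)}\tau^{(t)}\right]=|\Delta^{(t)}|$.
   Context: An insertion-only edge stream: at each time step $t=1,2,\dots$ an edge $e_t=\{u,v\}$ between two distinct vertices arrives, which is not already present; $G^{(t)}=(V^{(t)},E^{(t)})$ with $E^{(t)}=\{e_1,\dots,e_t\}$. A triangle in $G^{(t)}$ is a set of three edges $\{\{u,v\},\{v,w\},\{w,u\}\}\subseteq E^{(t)}$ with $u,v,w$ distinct; $\Delta^{(t)}$ is the set of all triangles of $G^{(t)}$. TRIEST-BASE maintains an edge sample $\mathcal{S}$ (initially empty) by reservoir sampling with capacity $M$: at time $t$, if $t\le M$ the edge $e_t$ is inserted into $\mathcal{S}$; if $t>M$, with probability $M/t$ an edge chosen uniformly at random from $\mathcal{S}$ is removed from $\mathcal{S}$ and then $e_t$ is inserted, otherwise $\mathcal{S}$ is unchanged. It maintains a counter $\tau$ (initially $0$): immediately after an edge $\{u,v\}$ is inserted into (resp. removed from) $\mathcal{S}$, $\tau$ is increased (resp. decreased) by $|\mathcal{N}^{\mathcal{S}}_{u,v}|$, the number of vertices $c$ such that both $\{c,u\}$ and $\{c,v\}$ are in the current $\mathcal{S}$. $\tau^{(t)}$ denotes the value of $\tau$ at the end of time step $t$. For positive integers $a\le\min\{M,b\}$, $\xi_{a,b}=1$ if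 $b\le M$ and $\xi_{a,b}=\prod_{i=0}^{a-1}\frac{b-i}{M-i}$ otherwise; $\xi^{(t)}=\xi_{3,t}$. The algorithm's estimate of $|\Delta^{(t)}|$ is $\xi^{(t)}\tau^{(t)}$. *)

(* TRIEST-BASE modelled as an explicit finite probability
   distribution (a weighted list of outcomes) over the algorithm's state. *)
From mathcomp Require Import all_boot all_order all_algebra.
Set Implicit Arguments. Unset Strict Implicit. Unset Printing Implicit Defensive.
Import Order.TTheory GRing.Theory Num.Theory.
Local Open Scope ring_scope.

(* An (undirected) edge {u,v} is given by a pair of vertices (nat);
   (u,v) and (v,u) denote the same edge. *)
Definition edge := (nat * nat)%type.
Definition enorm (e : edge) : edge := (minn e.1 e.2, maxn e.1 e.2).

Definition adj (S : seq edge) (a b : nat) : bool := ((a, b) \in S) || ((b, a) \in S).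

Definition verts (S : seq edge) : seq nat := undup (flatten [seq [:: e.1; e.2] | e <- S]).

Definition nbhd (S : seq edge) (u v : nat) : seq nat :=
  [seq c <- verts S | adj S c u && adj S c v].

(* triangles of the graph with edge set E, each listed once by its vertex
   triple a < b < c (a triangle {{a,b},{b,c},{c,a}} is determined by {a,b,c}) *)
Definition triangles (E : seq edge) : seq (nat * nat * nat) :=
  [seq x <- flatten [seq [seq (ab, c) | ab <- [seq (a, b) | a <- verts E, b <- verts E]] | c <- verts E] |
     let: (a, b, c) := x in
     [&& (a < b)%N, (b < c)%N, adj E a b, adj E b c & adj E a c]].

(* an insertion-only edge stream e_1, e_2, ... (e 0 is unused) *)
Definition valid_stream (e : nat -> edge) : Prop :=
  (forall t, (0 < t)%N -> (e t).1 != (e t).2) /\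
  (forall s t, (0 < s)%N -> (s < t)%N -> enorm (e s) != enorm (e t)).

Definition E_at (e : nat -> edge) (t : nat) : seq edge := [seq e i | i <- iota 1 t].

Definition dist (R : Type) (T : Type) := seq (R * T).
Definition dret (R : ringType) T (x : T) : dist R T := [:: (1, x)].
Definition dbind (R : ringType) T U (d : dist R T) (f : T -> dist R U) : dist R U :=
  flatten [seq [seq (p.1 * q.1, q.2) | q <- f p.2] | p <- d].
Definition prob (R : ringType) T (d : dist R T) (P : pred T) : R :=
  \sum_(p <- d | P p.2) p.1.
Definition expect (R : ringType) T (d : dist R T) (X : T -> R) : R :=
  \sum_(p <- d) p.1 * X p.2.

(* state of TRIEST-BASE : edge sample S and counter tau *)
Definition state := (seq edge * int)%type.

Definition ins (st : state) (f : edge) : state :=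
  let S := f :: st.1 in (S, st.2 + (size (nbhd S f.1 f.2))%:Z)%R.
Definition del (st : state) (f : edge) : state :=
  let S := rem f st.1 in (S, st.2 - (size (nbhd S f.1 f.2))%:Z)%R.

Definition step (R : fieldType) (M t : nat) (et : edge) (st : state) : dist R state :=
  if (t <= M)%N then dret R (ins st et)
  else
    (* with prob M/t: remove a uniformly random edge of S, then insert et *)
    [seq ((M%:R / t%:R) * (size st.1)%:R^-1, ins (del st f) et) | f <- st.1]
    ++ [:: (1 - M%:R / t%:R, st)].

Fixpoint run (R : fieldType) (M : nat) (e : nat -> edge) (t : nat) : dist R state :=
  match t with
  | 0 => dret R ([::], 0%R)
  | t'.+1 => dbind (run R M e t') (step R M t (e t))
  end.

Definition xi_ab (R : fieldType) (M a b : nat) : R :=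
  if (b <= M)%N then 1 else \prod_(i < a) ((b - i)%:R / (M - i)%:R).
Definition xi (R : fieldType) (M t : nat) : R := xi_ab R M 3 t.

From mathcomp Require Import all_boot all_order all_algebra.
From mathcomp Require Import zify ring.
Import Order.TTheory GRing.Theory Num.Theory.
Set Implicit Arguments. Unset Strict Implicit. Unset Printing Implicit Defensive.

(* The counter tau always equals the number of triangles of the sample S:
   inserting or removing an edge {u,v} changes that number by exactly the
   number of common neighbours of u and v in the sample.  While t <= M every
   edge is kept, so S = E^(t).  Once t > M, reservoir sampling keeps any fixed
   set of k <= M edges of E^(t) in S with probability M^_k / t^_k (falling
   factorials), by induction on t.  With k = 3 for every triangle of G^(t),
   linearity of expectation gives E[tau] = |Delta^(t)| / xi^(t).  Triangles are
   counted as indicators over vertex triples a < b < c below a bound N, which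
   turns both the tau updates and linearity into rearrangements of finite
   sums. *)

Lemma big_widen_uniq (R : Type) (idx : R) (op : Monoid.com_law idx) (I : eqType)
    (s s' : seq I) (F : I -> R) :
  uniq s -> uniq s' -> {subset s <= s'} ->
  (forall x, x \in s' -> x \notin s -> F x = idx) ->
  \big[op/idx]_(x <- s) F x = \big[op/idx]_(x <- s') F x.
Proof.
move=> us us' ss' F0.
rewrite [RHS](bigID (mem s)) /= [X in op _ X]big1_seq ?Monoid.mulm1; last first.
  by move=> x /andP[xs xs']; apply: F0.
rewrite -[RHS]big_filter; apply: perm_big; apply: uniq_perm; rewrite ?filter_uniq //.
by move=> x; rewrite mem_filter; case xs: (x \in s); rewrite //= ss'.
Qed.

Lemma sumn_delta (I : eqType) (s : seq I) (w : I) (F : I -> nat) :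
  uniq s -> w \in s -> \sum_(x <- s) (x == w) * F x = F w.
Proof.
move=> us ws; rewrite (bigD1_seq w) //= eqxx mul1n big1 ?addn0 //.
by move=> x /negbTE ->.
Qed.

Lemma sumn_delta2 (I : eqType) (s : seq I) (u v : I) (F : I -> I -> nat) :
  uniq s -> u \in s -> v \in s ->
  \sum_(a <- s) \sum_(b <- s) ((b == v) && (a == u)) * F a b = F u v.
Proof.
move=> us us' vs.
under eq_bigr => a _ do under eq_bigr => b _ do rewrite -mulnb (mulnC (b == v)) -mulnA.
under eq_bigr => a _ do rewrite -big_distrr /= (sumn_delta (F a)) //.
exact: sumn_delta.
Qed.

Lemma orb3_andE (x1 x2 x3 y1 y2 y3 : bool) :
  ~~ (y1 && x1) -> ~~ (y2 && x2) -> ~~ (y3 && x3) ->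
  ~~ [|| y1 && y2, y2 && y3 | y1 && y3] ->
  ([&& x1 || y1, x2 || y2 & x3 || y3] : nat) =
  [&& x1, x2 & x3] + y1 * (x2 && x3) + y2 * (x1 && x3) + y3 * (x1 && x2).
Proof. by case: x1; case: x2; case: x3; case: y1; case: y2; case: y3. Qed.

Lemma vertsP S x :
  reflect (exists2 p, p \in S & (x == p.1) || (x == p.2)) (x \in verts S).
Proof.
rewrite /verts mem_undup; apply: (iffP flattenP) => [[s /mapP[p pS ->]]|[p pS]].
  by rewrite !inE => px; exists p.
by move=> px; exists [:: p.1; p.2]; [apply: map_f | rewrite !inE].
Qed.

Lemma adj_sym S x y : adj S x y = adj S y x.
Proof. by rewrite /adj orbC. Qed.

Lemma adj_verts S x y : adj S x y -> (x \in verts S) && (y \in verts S).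
Proof.
by case/orP=> xyS; apply/andP; split; apply/vertsP;
  [exists (x, y) | exists (x, y) | exists (y, x) | exists (y, x)];
  rewrite //= eqxx ?orbT.
Qed.

Lemma adj_cons S u v x y :
  adj ((u, v) :: S) x y = adj S x y || (x == u) && (y == v) || (x == v) && (y == u).
Proof.
rewrite /adj !inE !xpair_eqE.
by case: (x == u); case: (x == v); case: (y == u); case: (y == v);
  case: ((x, y) \in S); case: ((y, x) \in S).
Qed.

Lemma adj_cons_swap S u v : adj ((u, v) :: S) =2 adj ((v, u) :: S).
Proof. by move=> x y; rewrite !adj_cons orbAC. Qed.

Lemma eq_adj (S1 S2 : seq edge) : S1 =i S2 -> adj S1 =2 adj S2.
Proof. by move=> eqS x y; rewrite /adj !eqS. Qed.

Lemma enorm_swap u v : enorm (v, u) = enorm (u, v).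
Proof. by rewrite /enorm /= minnC maxnC. Qed.

Lemma enorm_inj p q : enorm p = enorm q -> p = q \/ p = (q.2, q.1).
Proof.
case: p q => [a b] [c d]; rewrite /enorm /= => -[eq_min eq_max].
have : (a = c /\ b = d) \/ (a = d /\ b = c) by lia.
by case=> -[-> ->]; [left | right].
Qed.

Lemma adj_enorm S x y : adj S x y = (enorm (x, y) \in map enorm S).
Proof.
apply/idP/idP.
  case/orP=> xyS; apply/mapP; [exists (x, y) | exists (y, x)] => //.
  by rewrite enorm_swap.
case/mapP=> p pS /esym /enorm_inj[] eq_p; rewrite eq_p /= in pS.
  by rewrite /adj pS.
by rewrite /adj pS orbT.
Qed.

Lemma enorm_lt x y : x < y -> enorm (x, y) = (x, y).
Proof. by move=> xy; rewrite /enorm /= (minn_idPl (ltnW xy)) (maxn_idPr (ltnW xy)). Qed.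

Definition loopfree (S : seq edge) : bool := all (fun p => p.1 != p.2) S.

Lemma adj_irr S x : loopfree S -> adj S x x = false.
Proof.
move=> /allP lf; rewrite /adj orbb; apply/negP => /lf /=; by rewrite eqxx.
Qed.

Definition edges_below (N : nat) (S : seq edge) :=
  forall p, p \in S -> p.1 < N /\ p.2 < N.

Lemma edges_below_ex S : exists N, edges_below N S.
Proof.
elim: S => [|p S [N SN]]; first by exists 0.
exists (maxn N (maxn p.1 p.2).+1) => q; rewrite inE !leq_max !ltnS.
by case/predU1P=> [->|/SN[-> ->]]; rewrite ?leq_maxl ?leq_maxr ?orbT.
Qed.

Lemma edges_below_tail N p S : edges_below N (p :: S) -> edges_below N S.
Proof. by move=> pSN q qS; apply: pSN; rewrite inE qS orbT. Qed.

Lemma verts_sub_iota N S : edges_below N S -> {subset verts S <= iota 0 N}.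
Proof.
by move=> SN x /vertsP[p /SN[p1N p2N]]; rewrite mem_iota /= => /orP[]/eqP->.
Qed.

Definition sampled (A S : seq edge) : bool := all (fun a => a \in map enorm S) A.

Lemma mem_enorm_rem (S : seq edge) f x : uniq (map enorm S) -> f \in S ->
  (x \in map enorm (rem f S)) = (x \in map enorm S) && (x != enorm f).
Proof.
move=> uS fS; have Sperm := perm_map enorm (perm_to_rem fS).
have : uniq (map enorm (f :: rem f S)) by rewrite -(perm_uniq Sperm).
rewrite (perm_mem Sperm) map_cons cons_uniq inE => /andP[fresh _].
by case: (x =P enorm f) => [->|_]; rewrite ?(negPf fresh) ?andbT.
Qed.

Lemma all_and_neq (T : eqType) (P : pred T) (B : seq T) y :
  all (fun x => P x && (x != y)) B = all P B && (y \notin B).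
Proof. by rewrite -has_pred1 -all_predC -all_predI. Qed.

Lemma sampled_cons_rem S f h B : uniq (map enorm S) -> f \in S -> enorm h \notin B ->
  sampled B (h :: rem f S) = sampled B S && (enorm f \notin B).
Proof.
move=> uS fS hB; rewrite /sampled -all_and_neq; apply: eq_in_all => x xB.
have xh : x != enorm h by apply: contraNneq hB => <-.
by rewrite map_cons inE (negPf xh) mem_enorm_rem.
Qed.

Lemma count_enorm_notin (S B : seq edge) : uniq (map enorm S) -> uniq B ->
  {subset B <= map enorm S} ->
  count (fun f => enorm f \notin B) S = size S - size B.
Proof.
move=> uS uB BS.
have -> : count (fun f => enorm f \notin B) S = count (predC (mem B)) (map enorm S).
  by rewrite count_map.
have := count_predC (mem B) (map enorm S); rewrite size_map.
suff -> : count (mem B) (map enorm S) = size B by lia.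
rewrite -size_filter; apply/perm_size/uniq_perm; rewrite ?filter_uniq // => x.
by rewrite mem_filter; apply/andP/idP => [[]//|xB]; split; last exact: BS.
Qed.

Definition triple (A : rel nat) (a b c : nat) : bool :=
  [&& a < b, b < c, A a b, A b c & A a c].

Lemma triple_sub (A B : rel nat) a b c : subrel A B -> triple A a b c -> triple B a b c.
Proof. by move=> AB; rewrite /triple => /and5P[-> -> /AB -> /AB -> /AB ->]. Qed.

Lemma triple_sampled S a b c : a < b < c ->
  triple (adj S) a b c = sampled [:: (a, b); (b, c); (a, c)] S.
Proof.
case/andP=> ab bc; have ac := ltn_trans ab bc.
by rewrite /triple /sampled /= ab bc !adj_enorm !enorm_lt // andbT.
Qed.

(* Unlike [triangles S] it depends on S only through
   [adj S] and ranges over a fixed vertex set, so it can be compared across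
   samples and summed termwise. *)
Definition tri_count (N : nat) (S : seq edge) : nat :=
  \sum_(c <- iota 0 N) \sum_(a <- iota 0 N) \sum_(b <- iota 0 N) triple (adj S) a b c.

Lemma size_triangles N S : edges_below N S -> size (triangles S) = tri_count N S.
Proof.
move=> SN; have sV := verts_sub_iota SN.
have widen (F : nat -> nat) (suppF : forall x, F x != 0 -> x \in verts S) :
    \sum_(x <- verts S) F x = \sum_(x <- iota 0 N) F x.
  apply: big_widen_uniq; rewrite ?undup_uniq ?iota_uniq // => x _ xV.
  by apply/eqP; apply: contraNT xV; apply: suppF.
rewrite /triangles size_filter -sum1_count big_mkcond big_flatten /= big_map /tri_count.
rewrite widen => [|c]; last first.
  rewrite big_map big_allpairs; apply: contraNT => /negPf cV.
  rewrite big1 // => a _; rewrite big1 // => b _; rewrite /= /triple.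
  by case: ifP => //= /and5P[_ _ _ /adj_verts /andP[_]]; rewrite cV.
apply: eq_bigr => c _; rewrite big_map big_allpairs widen => [|a]; last first.
  apply: contraNT => /negPf aV; rewrite big1 // => b _.
  by case: ifP => //= /and5P[_ _ /adj_verts /andP[]]; rewrite aV.
apply: eq_bigr => a _; rewrite widen // => b.
by case: ifP => //= /and5P[_ _ /adj_verts /andP[_ ->]].
Qed.

Lemma size_nbhd N S u v : edges_below N S ->
  size (nbhd S u v) = \sum_(c <- iota 0 N) (adj S c u && adj S c v).
Proof.
move=> SN; rewrite /nbhd size_filter -sum1_count big_mkcond /=.
apply: big_widen_uniq; rewrite ?iota_uniq ?undup_uniq //; first exact: verts_sub_iota.
by move=> c _ cV; case: ifP => // /andP[/adj_verts /andP[]]; rewrite (negPf cV).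
Qed.

(* A triple a < b < c can use the new edge {u,v} for at most one of its sides. *)
Lemma triple_cons (A A' : rel nat) u v : u < v -> ~~ A u v ->
  (forall x y, A' x y = A x y || (x == u) && (y == v) || (x == v) && (y == u)) ->
  forall a b c, (triple A' a b c : nat) =
  (triple A a b c
   + ((b == v) && (a == u)) * [&& a < b, b < c, A b c & A a c]
   + ((b == u) && (c == v)) * [&& a < b, b < c, A a b & A a c]
   + ((a == u) && (c == v)) * [&& a < b, b < c, A a b & A b c]).
Proof.
move=> uv Auv A'E a b c; rewrite /triple.
case ab: (a < b); case bc: (b < c); rewrite /= ?muln0 //.
have A'_lt x y : x < y -> A' x y = A x y || (x == u) && (y == v).
  move=> xy; rewrite A'E; case: (x =P v) => [xv|]; case: (y =P u) => [yu|];
    rewrite ?andbF ?orbF //; lia.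
rewrite !A'_lt ?(ltn_trans ab bc) // orb3_andE //.
- by rewrite (andbC (b == v)).
- by apply/negP => /andP[/andP[/eqP-> /eqP->]]; apply/negP.
- by apply/negP => /andP[/andP[/eqP-> /eqP->]]; apply/negP.
- by apply/negP => /andP[/andP[/eqP-> /eqP->]]; apply/negP.
by case: (a =P u); case: (b =P v); case: (b =P u); case: (c =P v) => //=; lia.
Qed.

Lemma tri_count_cons_lt N S u v : u < v -> ~~ adj S u v -> u < N -> v < N ->
  tri_count N ((u, v) :: S) =
  tri_count N S + \sum_(x <- iota 0 N) [&& x != u, x != v, adj S x u & adj S x v].
Proof.
move=> uv nA uN vN.
have uI : u \in iota 0 N by rewrite mem_iota.
have vI : v \in iota 0 N by rewrite mem_iota.
rewrite /tri_count.
under eq_bigr => c _ do under eq_bigr => a _ do under eq_bigr => b _ do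
  rewrite (triple_cons uv nA (adj_cons S u v)).
under eq_bigr => c _ do under eq_bigr => a _ do rewrite !big_split.
under eq_bigr => c _ do rewrite !big_split.
rewrite !big_split /= -!addnA; congr (_ + _).
have uIN := iota_uniq 0 N.
rewrite (eq_bigr _ (fun c _ => sumn_delta2
  (fun a b => [&& a < b, b < c, adj S b c & adj S a c] : nat) uIN uI vI)).
under [X in _ + (X + _)]eq_bigr => c _ do
  rewrite exchange_big /= (eq_bigr _ (fun b _ => esym (big_distrr _ _ _))) /=.
rewrite (sumn_delta2 (fun c b =>
  \sum_(a <- iota 0 N) [&& a < b, b < c, adj S a b & adj S a c] : nat) uIN vI uI).
under [X in _ + (_ + X)]eq_bigr => c _ do
  rewrite (eq_bigr _ (fun a _ => esym (big_distrr _ _ _))) /=.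
rewrite (sumn_delta2 (fun c a =>
  \sum_(b <- iota 0 N) [&& a < b, b < c, adj S a b & adj S b c] : nat) uIN vI uI).
rewrite -!big_split /=; apply: eq_bigr => x _.
rewrite uv !(adj_sym S x) /=.
case: (ltngtP x u) => [xu|ux|xu]; case: (ltngtP x v) => [xv|vx|xv] //=;
  rewrite ?addn0 ?add0n //; lia.
Qed.

Lemma tri_count_cons N S u v : u != v -> ~~ adj S u v -> u < N -> v < N ->
  tri_count N ((u, v) :: S) =
  tri_count N S + \sum_(x <- iota 0 N) [&& x != u, x != v, adj S x u & adj S x v].
Proof.
rewrite neq_ltn => /orP[uv|vu]; first exact: tri_count_cons_lt.
rewrite adj_sym => nAvu uN vN.
have -> : tri_count N ((u, v) :: S) = tri_count N ((v, u) :: S).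
  apply: eq_bigr => c _; apply: eq_bigr => a _; apply: eq_bigr => b _.
  by rewrite /triple !(adj_cons_swap S u v).
rewrite tri_count_cons_lt //; congr (_ + _).
by apply: eq_bigr => x _; rewrite andbCA (andbC (adj S x v)).
Qed.

Lemma eq_size_triangles S1 S2 : adj S1 =2 adj S2 ->
  size (triangles S1) = size (triangles S2).
Proof.
move=> eqA; have [N SN] := edges_below_ex (S1 ++ S2).
have [S1N S2N] : edges_below N S1 /\ edges_below N S2.
  by split=> p pS; apply: SN; rewrite mem_cat pS ?orbT.
rewrite (size_triangles S1N) (size_triangles S2N).
apply: eq_bigr => c _; apply: eq_bigr => a _; apply: eq_bigr => b _.
by rewrite /triple !eqA.
Qed.

Lemma size_nbhd_loopfree N S u v : loopfree S -> edges_below N S ->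
  size (nbhd S u v) =
  \sum_(x <- iota 0 N) [&& x != u, x != v, adj S x u & adj S x v].
Proof.
move=> lf SN; rewrite (size_nbhd _ _ SN); apply: eq_bigr => x _.
case: (x =P u) => [->|_]; first by rewrite adj_irr.
by case: (x =P v) => [->|_]; rewrite /= ?adj_irr ?andbF.
Qed.

Lemma size_nbhd_cons S u v : u != v -> loopfree S ->
  size (nbhd ((u, v) :: S) u v) = size (nbhd S u v).
Proof.
move=> uv lf; have [N SN] := edges_below_ex ((u, v) :: S).
have lf' : loopfree ((u, v) :: S) by rewrite /= uv.
have S'N := edges_below_tail SN.
rewrite (size_nbhd_loopfree _ _ lf' SN) (size_nbhd_loopfree _ _ lf S'N).
apply: eq_bigr => x _; rewrite !adj_cons.
by case: (x =P u); case: (x =P v); rewrite /= ?orbF.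
Qed.

Lemma size_triangles_cons S u v : u != v -> ~~ adj S u v -> loopfree S ->
  size (triangles ((u, v) :: S)) = size (triangles S) + size (nbhd S u v).
Proof.
move=> uv nA lf; have [N SN] := edges_below_ex ((u, v) :: S).
have S'N := edges_below_tail SN; have [uN vN] := SN _ (mem_head _ _).
rewrite (size_triangles SN) (size_triangles S'N) tri_count_cons //.
by rewrite (size_nbhd_loopfree _ _ lf S'N).
Qed.

Definition counts_triangles (st : state) : bool :=
  st.2 == Posz (size (triangles st.1)).

Lemma counts_triangles_ins st u v : u != v -> ~~ adj st.1 u v -> loopfree st.1 ->
  counts_triangles st -> counts_triangles (ins st (u, v)).
Proof.
move=> uv nA lf /eqP tau.
by rewrite /counts_triangles /ins /= tau size_triangles_cons // size_nbhd_cons.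
Qed.

Lemma counts_triangles_del st f : uniq (map enorm st.1) -> loopfree st.1 ->
  f \in st.1 -> counts_triangles st -> counts_triangles (del st f).
Proof.
case: st f => S tau [u v] /= uS lf fS /eqP /= ->.
have Sperm := perm_to_rem fS.
have /andP[fresh _] : uniq (map enorm ((u, v) :: rem (u, v) S)).
  by rewrite -(perm_uniq (perm_map enorm Sperm)).
have /andP[uv lf'] : loopfree ((u, v) :: rem (u, v) S).
  by rewrite /loopfree -(perm_all _ Sperm).
rewrite /counts_triangles /del /= (eq_size_triangles (eq_adj (perm_mem Sperm))).
by rewrite size_triangles_cons ?adj_enorm // PoszD addrK.
Qed.

Section Expectation.

Local Open Scope ring_scope.

Variables (R : comNzRingType) (T : eqType).
Implicit Types (d : dist R T) (X Y : T -> R).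

Lemma expect_bind (U : Type) (d : dist R U) (f : U -> dist R T) X :
  expect (dbind d f) X = \sum_(p <- d) p.1 * expect (f p.2) X.
Proof.
rewrite /expect /dbind big_flatten /= big_map; apply: eq_bigr => p _.
by rewrite big_map big_distrr; apply: eq_bigr => q _ /=; rewrite mulrA.
Qed.

Lemma expectZ d k X : expect d (fun s => k * X s) = k * expect d X.
Proof. by rewrite /expect big_distrr; apply: eq_bigr => p _; rewrite mulrCA. Qed.

Lemma expect_sum d (I : Type) (r : seq I) (X : I -> T -> R) :
  expect d (fun s => \sum_(i <- r) X i s) = \sum_(i <- r) expect d (X i).
Proof.
rewrite /expect; under eq_bigr => p _ do rewrite big_distrr.
exact: exchange_big.
Qed.

Lemma eq_expect_in d X Y : {in map snd d, X =1 Y} -> expect d X = expect d Y.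
Proof.
move=> eqXY; rewrite /expect big_seq [RHS]big_seq.
by apply: eq_bigr => p pd; rewrite eqXY // map_f.
Qed.

Lemma expect0 d : expect d (fun _ => 0) = 0.
Proof. by rewrite /expect big1 // => p _; rewrite mulr0. Qed.

Lemma mem_dbind (U : eqType) (d : dist R U) (f : U -> dist R T) p :
  p \in dbind d f -> exists2 q, q \in d & p.2 \in map snd (f q.2).
Proof.
by rewrite /dbind => /flattenP[_ /mapP[q qd ->] /mapP[r rf ->]]; exists q => //=; apply: map_f.
Qed.

End Expectation.

Lemma sumr_count (R : nzSemiRingType) (T : Type) (a : pred T) (s : seq T) :
  (\sum_(x <- s) (a x)%:R = (count a s)%:R :> R)%R.
Proof. by elim: s => [|x s IH]; rewrite ?big_nil ?big_cons //= IH natrD. Qed.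

Lemma sum_sampled_cons_rem (R : nzSemiRingType) S h B :
  uniq (map enorm S) -> uniq B -> enorm h \notin B ->
  (\sum_(f <- S) (sampled B (h :: rem f S))%:R =
   (sampled B S)%:R * (size S - size B)%N%:R :> R)%R.
Proof.
move=> uS uB hB; rewrite big_seq.
under eq_bigr => f fS do rewrite sampled_cons_rem //.
rewrite -big_seq; case BS: (sampled B S); last by rewrite big1 ?mul0r.
by rewrite mul1r sumr_count count_enorm_notin //; apply/allP.
Qed.

Lemma ffact_neq0 (R : numDomainType) n k : k <= n -> ((n ^_ k)%:R != 0 :> R)%R.
Proof. by rewrite pnatr_eq0 -lt0n ffact_gt0. Qed.

Lemma natr_tri_count (R : nzSemiRingType) N S :
  ((tri_count N S)%:R = \sum_(c <- iota 0 N) \sum_(a <- iota 0 N) \sum_(b <- iota 0 N)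
                          (triple (adj S) a b c)%:R :> R)%R.
Proof.
rewrite natr_sum; apply: eq_bigr => c _; rewrite natr_sum.
by apply: eq_bigr => a _; rewrite natr_sum.
Qed.

Section Stream.

Variable e : nat -> edge.
Hypothesis e_valid : valid_stream e.

Lemma E_atP t x : reflect (exists2 i, 0 < i <= t & x = e i) (x \in E_at e t).
Proof.
apply: (iffP mapP) => -[i]; rewrite ?mem_iota => ti ->; exists i; rewrite ?mem_iota //; lia.
Qed.

Lemma E_atS t : E_at e t.+1 = rcons (E_at e t) (e t.+1).
Proof.
rewrite /E_at; have := iotaD 1 t 1; rewrite addn1 add1n => ->.
by rewrite map_cat cats1.
Qed.

Lemma size_E_at t : size (E_at e t) = t.
Proof. by rewrite size_map size_iota. Qed.

Lemma loopfree_E_at t : loopfree (E_at e t).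
Proof. by apply/allP => _ /E_atP[i /andP[i0 _] ->]; case: e_valid => /(_ i i0). Qed.

Lemma enorm_fresh t : enorm (e t.+1) \notin map enorm (E_at e t).
Proof.
apply/mapP => -[_ /E_atP[i /andP[i0 it] ->] eq_ei].
by case: e_valid => _ /(_ i t.+1 i0 it); rewrite eq_ei eqxx.
Qed.

Definition sample_ok (t : nat) (st : state) : bool :=
  [&& uniq (map enorm st.1), all (fun f => f \in E_at e t) st.1 & counts_triangles st].

Lemma sample_ok_loopfree t st : sample_ok t st -> loopfree st.1.
Proof.
case/and3P=> _ /allP sub _; apply/allP => f /sub.
by move/allP: (loopfree_E_at t); apply.
Qed.

Lemma sample_fresh t st : sample_ok t st -> enorm (e t.+1) \notin map enorm st.1.
Proof.
case/and3P=> _ /allP sub _; apply: contra (enorm_fresh t) => /mapP[f /sub fE ->].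
exact: map_f.
Qed.

Lemma sample_ok_S t st : sample_ok t st -> sample_ok t.+1 st.
Proof.
case/and3P=> uS /allP sub tau; rewrite /sample_ok uS tau andbT.
by apply/allP => f /sub; rewrite E_atS mem_rcons inE orbC => ->.
Qed.

Lemma sample_ok_ins t st : sample_ok t st -> sample_ok t.+1 (ins st (e t.+1)).
Proof.
move=> ok; have fresh := sample_fresh ok.
have lf := sample_ok_loopfree ok; case/and3P: ok => uS /allP sub tau.
rewrite /sample_ok /= fresh uS E_atS mem_rcons mem_head /=; apply/andP; split.
  by apply/allP => f /sub; rewrite mem_rcons inE orbC => ->.
have uv : (e t.+1).1 != (e t.+1).2 by case: e_valid => /(_ t.+1 isT).
case: (e t.+1) fresh uv => u v fresh uv.
by apply: counts_triangles_ins; rewrite ?adj_enorm.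
Qed.

Lemma sample_ok_del t st f : sample_ok t st -> f \in st.1 -> sample_ok t (del st f).
Proof.
move=> /[dup] /sample_ok_loopfree lf /and3P[uS /allP sub tau] fS.
rewrite /sample_ok counts_triangles_del // andbT /=.
have : uniq (map enorm (f :: rem f st.1)).
  by rewrite -(perm_uniq (perm_map enorm (perm_to_rem fS))).
rewrite map_cons cons_uniq => /andP[_ ->].
by apply/allP => g /mem_rem /sub.
Qed.

Variable M : nat.

Definition triest_inv (t : nat) (st : state) : bool :=
  sample_ok t st && (size st.1 == minn t M).

Lemma triest_inv_step (R : fieldType) t st : triest_inv t st ->
  all (triest_inv t.+1) (map snd (step R M t.+1 (e t.+1) st)).
Proof.
case/andP=> ok /eqP size_S; rewrite /step.
case: ifP => tM.
  by rewrite /= andbT /triest_inv sample_ok_ins //= size_S; apply/eqP; lia.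
rewrite map_cat all_cat /= andbT /triest_inv sample_ok_S //= size_S.
apply/andP; split; last by apply/eqP; lia.
rewrite -map_comp; apply/allP => _ /mapP[f fS ->] /=.
rewrite sample_ok_ins ?sample_ok_del //= size_rem // size_S.
have : 0 < size st.1 by case: (st.1) fS.
by rewrite size_S => ?; apply/eqP; lia.
Qed.

Lemma triest_inv_run (R : fieldType) t p : p \in run R M e t -> triest_inv t p.2.
Proof.
elim: t p => [|t IH] p /=; first by rewrite mem_seq1 => /eqP->; rewrite /triest_inv min0n.
by case/mem_dbind=> q /IH /(triest_inv_step R) /allP; apply.
Qed.

Lemma triest_inv_sub t st : triest_inv t st -> {subset st.1 <= E_at e t}.
Proof. by case/andP=> /and3P[_ /allP]. Qed.

Lemma triest_inv_tau t st : triest_inv t st -> st.2 = Posz (size (triangles st.1)).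
Proof. by case/andP=> /and3P[_ _ /eqP]. Qed.

Lemma sample_full t st : triest_inv t st -> t <= M -> st.1 =i E_at e t.
Proof.
move=> /[dup] /triest_inv_sub sub /andP[/and3P[uS _ _] /eqP sizeS] tM.
have [|//] := uniq_min_size (map_uniq uS) sub.
by rewrite size_E_at sizeS (minn_idPl tM).
Qed.

Lemma run_dret (R : fieldType) t : t <= M ->
  exists2 st, run R M e t = dret R st & triest_inv t st.
Proof.
move=> tM; suff [st run_t] : exists st, run R M e t = dret R st.
  by exists st => //; apply: (@triest_inv_run R t (1%R, st)); rewrite run_t mem_head.
elim: t tM => [|t IH] tM; first by exists ([::], 0%R).
have [st run_t] := IH (ltnW tM); exists (ins st (e t.+1)).
by rewrite /= run_t /dbind /step tM /= mulr1.
Qed.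

Lemma mem_E_at_prev t x : x \in map enorm (E_at e t.+1) -> x != enorm (e t.+1) ->
  x \in map enorm (E_at e t).
Proof. by rewrite E_atS map_rcons mem_rcons inE => /orP[->|]. Qed.

Local Open Scope ring_scope.

(* If the new edge g lies in A, then A is sampled afterwards iff A minus g was
   sampled, g is inserted and the evicted edge lies outside A; otherwise iff A
   was sampled and either e_{t+1} is skipped or the evicted edge lies outside
   A. *)
Lemma expect_step_sampled (R : numFieldType) t st A :
  (0 < M)%N -> (M <= t)%N -> triest_inv t st -> uniq A -> (size A <= M)%N ->
  let g := enorm (e t.+1) in
  expect (step R M t.+1 (e t.+1) st) (fun s => (sampled A s.1)%:R) =
  if g \in A then (M - (size A).-1)%N%:R / t.+1%:R * (sampled (rem g A) st.1)%:R
  else (t.+1 - size A)%N%:R / t.+1%:R * (sampled A st.1)%:R.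
Proof.
move=> M0 Mt /andP[ok /eqP sizeS] uA AM g.
have {sizeS} sizeS : size st.1 = M by rewrite sizeS; apply/minn_idPr.
have fresh := sample_fresh ok; case/and3P: ok => uS _ _.
have M0' : M%:R != 0 :> R by rewrite pnatr_eq0 -lt0n.
have t0 : t.+1%:R != 0 :> R by rewrite pnatr_eq0.
rewrite /step leqNgt ltnS Mt /expect big_cat big_map big_seq1 /= -big_distrr /=.
case gA: (g \in A).
  have -> : sampled A st.1 = false.
    by apply/negbTE/allPn; exists g => //; apply: fresh.
  have Aperm := perm_to_rem gA.
  under eq_bigr => f _ do rewrite /sampled (perm_all _ Aperm) /= mem_head -/(sampled _ _).
  rewrite sum_sampled_cons_rem ?rem_uniq ?mem_rem_uniqF // sizeS size_rem //.
  have A0 : (0 < size A)%N by case: (A) gA.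
  rewrite natrB; last by lia.
  by rewrite mulr0n mulr0 addr0; field; rewrite [1 + _]addrC natr1 M0' t0.
have At : (size A <= t.+1)%N by lia.
rewrite sum_sampled_cons_rem ?gA // sizeS !natrB //.
by field; rewrite [1 + _]addrC natr1 M0' t0.
Qed.

Lemma expect_run_S (R : numFieldType) t (K : R) (X Y : state -> R) :
  (forall st, triest_inv t st -> expect (step R M t.+1 (e t.+1) st) X = K * Y st) ->
  expect (run R M e t.+1) X = K * expect (run R M e t) Y.
Proof.
move=> stepXY; rewrite [run _ _ _ _.+1]/= expect_bind -expectZ [RHS]/expect.
rewrite big_seq [RHS]big_seq; apply: eq_bigr => p pd.
by rewrite stepXY // (triest_inv_run pd).
Qed.

Lemma expect_run_sampled (R : numFieldType) d A : (0 < M)%N -> uniq A ->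
  {subset A <= map enorm (E_at e (M + d))} -> (size A <= M)%N ->
  expect (run R M e (M + d)) (fun s => (sampled A s.1)%:R) =
  (M ^_ size A)%:R / ((M + d) ^_ size A)%:R.
Proof.
move=> M0; elim: d A => [|d IH] A uA AE AM.
  have [st run_M inv] := run_dret R (leqnn M); rewrite addn0 in AE *.
  have SE := eq_mem_map enorm (sample_full inv (leqnn M)).
  rewrite run_M /expect big_seq1 mul1r divff ?ffact_neq0 //.
  by rewrite (_ : sampled A st.1 = true) //; apply/allP => x /AE; rewrite SE.
rewrite addnS in AE *; set t := (M + d)%N in IH AE *.
have Mt : (M <= t)%N by rewrite leq_addr.
have t0 : t.+1%:R != 0 :> R by rewrite pnatr_eq0.
case gA: (enorm (e t.+1) \in A).
  set g := enorm (e t.+1) in gA.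
  rewrite (@expect_run_S _ _ ((M - (size A).-1)%N%:R / t.+1%:R)
             _ (fun s => (sampled (rem g A) s.1)%:R)); last first.
    by move=> st inv; rewrite expect_step_sampled // -/g gA.
  have A0 : (0 < size A)%N by case: (A) gA.
  rewrite IH ?rem_uniq ?size_rem //; last first.
  - by move: A0 AM; case: (size A) => //= k _ /ltnW.
  - by move=> x; rewrite mem_rem_uniq // => /andP[/= xg /AE /mem_E_at_prev]; apply.
  move: A0 AM; case: (size A) => // k _ kM /=.
  rewrite ffactnSr ffactSS !natrM natrB; last by lia.
  by field; rewrite ?ffact_neq0 ?[1 + _]addrC ?natr1 ?t0 //; lia.
rewrite (@expect_run_S _ _ ((t.+1 - size A)%N%:R / t.+1%:R)
           _ (fun s => (sampled A s.1)%:R)); last first.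
  by move=> st inv; rewrite expect_step_sampled // gA.
rewrite IH //; last first.
  by move=> x xA; apply: mem_E_at_prev (AE x xA) _; apply: contraTneq xA => ->; rewrite gA.
have fact_step : (t.+1 ^_ size A * (t.+1 - size A) = t.+1 * t ^_ size A)%N.
  by rewrite -ffactnSr ffactSS.
have -> : (t.+1 - size A)%N%:R = t.+1%:R * (t ^_ size A)%:R / (t.+1 ^_ size A)%:R :> R.
  have nz : (t.+1 ^_ size A)%:R != 0 :> R by rewrite ffact_neq0 //; lia.
  by rewrite -natrM -fact_step natrM mulrC mulKf.
by field; rewrite ?ffact_neq0 ?[1 + _]addrC ?natr1 ?t0 //; lia.
Qed.

Lemma expect_triple (R : numFieldType) d a b c : (3 <= M)%N ->
  expect (run R M e (M + d)) (fun s => (triple (adj s.1) a b c)%:R) =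
  (triple (adj (E_at e (M + d))) a b c)%:R * ((M ^_ 3)%:R / ((M + d) ^_ 3)%:R).
Proof.
move=> M3; set E := E_at e (M + d).
case tri: (triple (adj E) a b c); last first.
  rewrite mul0r -(expect0 (run R M e (M + d))); apply: eq_expect_in => _ /mapP[p pd ->].
  apply/eqP; rewrite pnatr_eq0 eqb0; apply: contraFN tri; apply: triple_sub => x y.
  have sub := triest_inv_sub (triest_inv_run pd).
  by case/orP=> xyS; rewrite /adj (sub _ xyS) ?orbT.
have abc : (a < b < c)%N by case/and5P: tri => -> ->.
have [ab bc] := andP abc; have ac := ltn_trans ab bc.
set A := [:: (a, b); (b, c); (a, c)].
have uA : uniq A.
  by rewrite /A /= !inE !xpair_eqE andbT; lia.
have AE : {subset A <= map enorm E} by move: tri; rewrite triple_sampled // => /allP.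
rewrite mul1r -[3%N]/(size A) -expect_run_sampled //; last by lia.
by apply: eq_expect_in => s _; rewrite triple_sampled.
Qed.

Lemma expect_size_triangles (R : numFieldType) d : (3 <= M)%N ->
  expect (run R M e (M + d)) (fun s => (size (triangles s.1))%:R) =
  (M ^_ 3)%:R / ((M + d) ^_ 3)%:R * (size (triangles (E_at e (M + d))))%:R.
Proof.
move=> M3; have [N EN] := edges_below_ex (E_at e (M + d)).
rewrite (size_triangles EN) natr_tri_count mulr_sumr.
rewrite (eq_expect_in (Y := fun s => (tri_count N s.1)%:R)); last first.
  move=> _ /mapP[p pd ->]; have sub := triest_inv_sub (triest_inv_run pd).
  by rewrite (size_triangles (N := N)) // => q /sub; apply: EN.
under eq_expect_in => s _ do rewrite natr_tri_count.
rewrite expect_sum; apply: eq_bigr => c _; rewrite expect_sum mulr_sumr.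
apply: eq_bigr => a _; rewrite expect_sum mulr_sumr.
by apply: eq_bigr => b _; rewrite expect_triple // mulrC.
Qed.

End Stream.

Local Open Scope ring_scope.

Lemma xi_gt (R : fieldType) M t : (M < t)%N -> xi R M t = (t ^_ 3)%:R / (M ^_ 3)%:R.
Proof.
move=> Mt; rewrite /xi /xi_ab leqNgt Mt /=.
by rewrite prodf_div !ffact_prod !natr_prod.
Qed.

Theorem theorem4p2 (R : realFieldType) (M : nat) (e : nat -> edge) :
  (6 <= M)%N -> valid_stream e ->
  forall t : nat, (0 < t)%N ->
    ((t <= M)%N ->
       prob (run R M e t)
         (fun st => (xi R M t * st.2%:~R == st.2%:~R)
                    && (st.2 == (size (triangles (E_at e t)))%:Z)) = 1) /\
    ((M < t)%N ->
       expect (run R M e t) (fun st => xi R M t * st.2%:~R)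
       = (size (triangles (E_at e t)))%:R).
Proof.
move=> M6 e_valid t _; split=> [tM | Mt].
  have [st run_t inv] := run_dret e_valid R tM.
  rewrite run_t /prob /dret big_cons big_nil /= /xi /xi_ab tM mul1r eqxx.
  rewrite (triest_inv_tau inv).
  by rewrite (eq_size_triangles (eq_adj (sample_full inv tM))) eqxx addr0.
have [d td] : exists d, t = (M + d)%N by exists (t - M)%N; lia.
subst t.
rewrite expectZ (eq_expect_in (Y := fun s => (size (triangles s.1))%:R)); last first.
  by move=> _ /mapP[p pd ->]; rewrite (triest_inv_tau (triest_inv_run e_valid pd)).
have M3 : (3 <= M)%N by lia.
rewrite expect_size_triangles // xi_gt //.
have nzM : (M ^_ 3)%:R != 0 :> R by rewrite ffact_neq0.
have nzt : ((M + d) ^_ 3)%:R != 0 :> R by rewrite ffact_neq0 //; lia.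
by field; rewrite nzM nzt.
Qed.
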